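(* Let $\Omega=C_0(\mathbb{R}_+,\mathbb{R}^d)$ with the metric \[D(\omega,\omega')=\sum_{n=1}^{\infty}\frac{1}{2^n}\,\frac{\sup_{0\le t\le n}|\omega(t)-\omega'(t)|}{1+\sup_{0\le t\le n}|\omega(t)-\omega'(t)|},\] and let $\theta_t$ be the shift on $\Omega$, $\theta_t(\omega)(s)=\omega(t+s)-\omega(t)$. For $h>0$ define $\phi_P^{(h)}:\Omega\to(\mathbb{R}^d)^{\mathbb{N}^*}$, $\phi_P^{(h)}(\omega)=(\omega(nh)-\omega((n-1)h))_{n\ge1}$; $\phi_I^{(h)}:(\mathbb{R}^d)^{\mathbb{N}^*}\to\Omega$, $\phi_I^{(h)}(y)(t)=\sum_{n=0}^{\lfloor t/h\rfloor}y_n+\frac{t-\lfloor t/h\rfloor h}{h}y_{\lfloor t/h\rfloor+1}$ (with $y_0:=0$); and the sequence shift $\theta^{(h)}((y_n)_{n\ge1})=(y_{n+1})_{n\ge1}$. For $t\ge0$ define $\overline{\theta}^{(h)}_t:\Omega\to\Omega$ by \[\overline{\theta}^{(h)}_t(\omega)=\frac{(\lfloor t/h\rfloor+1)h-t}{h}\,\phi_I^{(h)}\circ(\theta^{(h)})^{\lfloor t/h\rfloor}\circ\phi_P^{(h)}(\omega)+\frac{t-\lfloor t/h\rfloor h}{h}\,\phi_I^{(h)}\circ(\theta^{(h)})^{\lfloor t/h\rfloor+1}\circ\phi_P^{(h)}(\omega).\] Then for every $\omega\in\Omega$ and every $t\in\mathbb{R}_+$, \[\lim_{h\to0}D\big(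\theta_t(\omega),\overline{\theta}^{(h)}_t(\omega)\big)=0.\]
   Context: $|\cdot|$ is the Euclidean norm on $\mathbb{R}^d$; $(\theta^{(h)})^0$ is the identity. $\overline{\theta}^{(h)}_t$ is the second (environment) component of the time-interpolated embedding in $\mathbb{R}^m\times\Omega$ of a discrete-time repeated-interaction dynamical system with time step $h$. *)

From HB Require Import structures.
From mathcomp Require Import all_boot all_order all_algebra.
From mathcomp Require Import all_classical all_reals all_analysis.
Set Implicit Arguments. Unset Strict Implicit. Unset Printing Implicit Defensive.
Import Order.TTheory GRing.Theory Num.Theory.
Import numFieldNormedType.Exports.
Local Open Scope classical_set_scope.
Local Open Scope ring_scope.

Section Defs.
Variables (R : realType) (d : nat).
Local Notation vec := 'rV[R]_d.
Local Notation path := (R -> vec).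

Definition enorm (v : vec) : R := Num.sqrt (\sum_(i < d) (v 0 i) ^+ 2).

(* Omega = C_0(R_+, R^d): continuous on [0,+oo) and starting at 0
   (values at negative times are irrelevant) *)
Definition in_Omega (om : path) : Prop :=
  {within `[0, +oo[, continuous om} /\ om 0 = 0.

Definition supdist (om om' : path) (n : nat) : R :=
  sup [set enorm (om t - om' t) | t in `[0, n%:R]].

Definition Dmetric (om om' : path) : R :=
  limn (fun N => \sum_(1 <= n < N) ((2 ^- n) * (supdist om om' n / (1 + supdist om om' n)))).

Definition theta (t : R) (om : path) : path := fun s => om (t + s) - om t.

Definition flr (x : R) : nat := Num.truncn x.

(* sequences (y_n)_{n>=1} are functions nat -> vec; the value at 0 is the
   convention y_0 := 0 and is always 0 in sequences built below *)
Definition phiP (h : R) (om : path) : nat -> vec :=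
  fun n => if n == 0%N then 0 else om (n%:R * h) - om (n.-1%:R * h).

Definition phiI (h : R) (y : nat -> vec) : path := fun t =>
  \sum_(0 <= n < (flr (t / h)).+1) (if n == 0%N then 0 else y n)
  + ((t - (flr (t / h))%:R * h) / h) *: y (flr (t / h)).+1.

Definition seqshift (y : nat -> vec) : nat -> vec :=
  fun n => if n == 0%N then 0 else y n.+1.

Definition thetabar (h t : R) (om : path) : path := fun s =>
  (((flr (t / h)).+1%:R * h - t) / h) *: phiI h (iter (flr (t / h)) seqshift (phiP h om)) s
  + ((t - (flr (t / h))%:R * h) / h) *: phiI h (iter (flr (t / h)).+1 seqshift (phiP h om)) s.
End Defs.

From HB Require Import structures.
From mathcomp Require Import all_boot all_order all_algebra.
From mathcomp Require Import all_classical all_reals all_analysis.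
From mathcomp Require Import ring lra.
Import Order.TTheory GRing.Theory Num.Theory.
Import numFieldNormedType.Exports.
Local Open Scope classical_set_scope.
Local Open Scope ring_scope.

(* Both [theta t om s] and [thetabar h t om s] are built from values of [om]
   near [t + s] and near [t]: unwinding the definitions, [thetabar h t om s]
   is a convex combination (with the weights of [t] and of [s] in their grid
   cells of length [h]) of increments [om x - om y] with grid points [x, y]
   within [2 h] of [t + s] and of [t] respectively.  Hence the pointwise error
   is at most twice the modulus of continuity of [om] at scale [2 h] on a
   compact interval, which vanishes with [h] by uniform continuity.  Finally
   [D] is controlled by its first [M] sup-distances up to a tail [2^(1-M)]. *)

Lemma mx_norm_coef_le {R : realType} {n} (v : 'rV[R]_n) i : `|v 0 i| <= `|v|.
Proof.
change (`|v|) with (mx_norm v); rewrite mx_normrE.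
exact: (le_bigmax _ (fun ij : 'I_1 * 'I_n => `|v ij.1 ij.2|) (0, i)).
Qed.

Lemma enorm_le_mx_norm {R : realType} {n} (v : 'rV[R]_n) : enorm v <= n%:R * `|v|.
Proof.
have sum_le : \sum_(i < n) v 0 i ^+ 2 <= (n%:R * `|v|) ^+ 2.
  apply: (@le_trans _ _ (\sum_(i < n) `|v| ^+ 2)).
    apply: ler_sum => i _; rewrite -real_normK ?num_real //.
    by rewrite lerXn2r ?nnegrE ?normr_ge0 // mx_norm_coef_le.
  rewrite sumr_const card_ord exprMn -(mulr_natl (`|v| ^+ 2)).
  apply: ler_wpM2r; first by rewrite exprn_ge0.
  case: n {v} => [|n]; first by rewrite expr0n.
  by rewrite -natrX ler_nat expnS leq_pmulr.
rewrite /enorm -(@ger0_norm _ (n%:R * `|v|)) ?mulr_ge0 //.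
by rewrite -sqrtr_sqr ler_sqrt // sqr_ge0.
Qed.

Lemma sumr_inv2_exp (R : realType) a k :
  \sum_(a <= n < a + k) (2 : R) ^- n = 2 * 2 ^- a - 2 * 2 ^- (a + k).
Proof.
elim: k => [|k IHk]; first by rewrite addn0 big_geq // subrr.
rewrite addnS big_nat_recr /= ?leq_addr // IHk exprS invfM.
set x := (2 : R) ^- (a + k).
by field; rewrite expf_neq0.
Qed.

Lemma sumr_inv2_exp_le (R : realType) a N : \sum_(a <= n < N) (2 : R) ^- n <= 2 * 2 ^- a.
Proof.
have [Na|aN] := leqP N a; first by rewrite big_geq // mulr_ge0 // invr_ge0 exprn_ge0.
rewrite -(subnKC (ltnW aN)) sumr_inv2_exp gerBl mulr_ge0 // invr_ge0 exprn_ge0 //.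
Qed.

Lemma inv2_exp_lt {R : realType} (eps : R) : 0 < eps ->
  exists2 M, (0 < M)%N & 2 * 2 ^- M < eps.
Proof.
move=> eps0; pose M := (Num.truncn (2 / eps)).+1; exists M => //.
have M_gt : 2 / eps < M%:R by exact: truncnS_gt.
have exp_gt : (M%:R : R) < 2 ^+ M by rewrite -natrX ltr_nat ltn_expl.
have exp_gt0 : (0 : R) < 2 ^+ M by rewrite exprn_gt0.
rewrite ltr_pdivrMr // in M_gt.
rewrite -/(2 / 2 ^+ M) ltr_pdivrMr //; nra.
Qed.

Definition Dseries {R : realType} (x : nat -> R) (N : nat) : R :=
  \sum_(1 <= n < N) (2 ^- n * (x n / (1 + x n))).

Lemma DmetricE {R : realType} {d} (om om' : R -> 'rV[R]_d) :
  Dmetric om om' = limn (Dseries (supdist om om')).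
Proof. by []. Qed.

Section Dseries.
Context {R : realType} {x : nat -> R}.
Hypothesis x_ge0 : forall n, 0 <= x n.

Let frac_le1 n : x n / (1 + x n) <= 1.
Proof. by have := x_ge0 n => ?; rewrite ler_pdivrMr; lra. Qed.

Let frac_le n : x n / (1 + x n) <= x n.
Proof. by have := x_ge0 n => ?; rewrite ler_pdivrMr; [nra | lra]. Qed.

Let term_ge0 n : 0 <= (2 : R) ^- n * (x n / (1 + x n)).
Proof. by rewrite mulr_ge0 ?invr_ge0 ?exprn_ge0 ?divr_ge0 ?addr_ge0. Qed.

Let term_le n : (2 : R) ^- n * (x n / (1 + x n)) <= 2 ^- n.
Proof. by rewrite ler_piMr ?invr_ge0 ?exprn_ge0 ?frac_le1. Qed.

Lemma is_cvg_Dseries : cvgn (Dseries x).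
Proof.
apply: nondecreasing_is_cvgn.
  apply/nondecreasing_seqP => -[|n]; first by rewrite /Dseries !big_geq.
  by rewrite /Dseries (@big_nat_recr _ _ _ n.+1 1) //= lerDl term_ge0.
exists (2 * 2 ^- 1) => _ [N _ <-].
by apply: le_trans (sumr_inv2_exp_le R 1 N); apply: ler_sum => n _; apply: term_le.
Qed.

Lemma lim_Dseries_ge0 : 0 <= limn (Dseries x).
Proof.
by apply: limr_ge is_cvg_Dseries _; apply: nearW => N; apply: sumr_ge0 => n _; apply: term_ge0.
Qed.

Lemma lim_Dseries_le M c : (0 < M)%N -> 0 <= c -> (forall n, (n < M)%N -> x n <= c) ->
  limn (Dseries x) <= c + 2 * 2 ^- M.
Proof.
move=> M0 c0 xc; apply: limr_le is_cvg_Dseries _; near=> N.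
have MN : (M <= N)%N by near: N; exists M.
rewrite /Dseries (big_cat_nat (n := M)) //=; apply: lerD.
  apply: (@le_trans _ _ (c * \sum_(1 <= n < M) (2 : R) ^- n)).
    rewrite mulr_sumr !big_nat; apply: ler_sum => n /andP[_ nM].
    by rewrite mulrC ler_wpM2r ?invr_ge0 ?exprn_ge0 // (le_trans (frac_le n)) ?xc.
  apply: (@le_trans _ _ (c * (2 * 2 ^- 1))); first by rewrite ler_wpM2l ?sumr_inv2_exp_le.
  by rewrite expr1 divff ?pnatr_eq0 // mulr1.
by apply: le_trans (sumr_inv2_exp_le R M N); apply: ler_sum => n _; apply: term_le.
Unshelve. all: by end_near.
Qed.

End Dseries.

Section UniformContinuity.
Context {R : realType} {V : normedModType R} {f : R -> V}.
Hypothesis f_cont : {within `[0, +oo[, continuous f}.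

Lemma continuous_nonneg_ball x e : 0 <= x -> 0 < e ->
  exists2 r, 0 < r & forall y, 0 <= y -> `|x - y| < r -> `|f x - f y| < e.
Proof.
move=> x0 e0; have x_in : `[0, +oo[%classic x by rewrite /= in_itv /= andbT.
have /cvgrPdist_lt/(_ e e0) := proj1 (subspace_continuousP _ _) f_cont x x_in.
rewrite near_withinE => -[r r0 fr]; exists r => // y y0 xy.
by apply: fr => //=; rewrite in_itv /= andbT.
Qed.

Lemma uniform_continuous_nonneg T e : 0 < e -> exists2 r, 0 < r &
  forall x y, 0 <= x <= T -> 0 <= y -> `|x - y| < r -> `|f x - f y| < e.
Proof.
move=> e0; pose P h x := forall y, 0 <= y -> `|x - y| < h -> `|f x - f y| < e.
have : \forall h \near (0 : R)^'+, `[0, T]%classic `<=` P h.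
  have K_compact : compact `[0, T]%classic by exact: segment_compact.
  apply: (proj2 (near_covering_withinP _) (proj1 (compact_near_coveringP _) K_compact)).
  move=> x Kx; have x0 : 0 <= x by move: Kx; rewrite /= in_itv /= => /andP[].
  have [r r0 fr] := continuous_nonneg_ball _ _ x0 (divr_gt0 e0 (ltr0n _ 2)).
  exists (ball x (r / 2), ball (0 : R) (r / 2)) => /=.
    split; first by apply: nbhsx_ballx; rewrite divr_gt0.
    by exists (r / 2); rewrite /= ?divr_gt0.
  move=> [x' h] [/= x'x h0] Kx' y y0 x'y; rewrite /ball /= in x'x h0.
  have x'0 : 0 <= x' by move: Kx'; rewrite /= in_itv /= => /andP[].
  have xy : `|x - y| < r.
    have := ler_normD (x - x') (x' - y); rewrite addrA subrK.
    have := ler_norm h; rewrite distrC subr0 in h0; lra.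
  have fx'x : `|f x' - f x| < e / 2 by rewrite distrC; apply: fr => //; lra.
  have fxy := fr y y0 xy.
  have := ler_normD (f x' - f x) (f x - f y); rewrite addrA subrK; lra.
case=> r /= r0 Pr; exists (r / 2); first by rewrite divr_gt0.
move=> x y xT y0 xy; apply: (Pr (r / 2)) => //.
- by rewrite /ball /= sub0r normrN ger0_norm ?divr_ge0 ?ltW //; lra.
- by rewrite divr_gt0.
Qed.

End UniformContinuity.

Lemma flr_div_itv {R : realType} (x h : R) : 0 <= x -> 0 < h ->
  (flr (x / h))%:R * h <= x < (flr (x / h)).+1%:R * h.
Proof.
move=> x0 h0; have /andP[lo hi] := truncn_itv (divr_ge0 x0 (ltW h0)).
by rewrite -ler_pdivlMr // -ltr_pdivrMr // lo hi.
Qed.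

Lemma norm_convex_le {R : realType} {V : normedModType R} (c e : R) (u v : V) :
  0 <= c <= 1 -> `|u| <= e -> `|v| <= e -> `|(1 - c) *: u + c *: v| <= e.
Proof.
move=> /andP[c0 c1] ue ve; apply: le_trans (ler_normD _ _) _.
by rewrite !normrZ (ger0_norm c0) ger0_norm; [nra | lra].
Qed.

(* [X] and [Y] stand for [om (t + s)] and [om t], [P0, P1] for the grid values
   around [t], and [A, B, C] for the grid values around [t + s]. *)
Lemma interpolation_error_le {R : realType} {n} (a b e : R) (X Y P0 P1 A B C : 'rV[R]_n) :
  0 <= a <= 1 -> 0 <= b <= 1 ->
  `|P0 - Y| <= e -> `|P1 - Y| <= e -> `|A - X| <= e -> `|B - X| <= e -> `|C - X| <= e ->
  `|X - Y - ((1 - a) *: (A - P0 + b *: (B - A)) + a *: (B - P1 + b *: (C - B)))| <= 2 * e.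
Proof.
move=> a01 b01 P0Y P1Y AX BX CX.
have -> : X - Y - ((1 - a) *: (A - P0 + b *: (B - A)) + a *: (B - P1 + b *: (C - B))) =
    ((1 - a) *: (P0 - Y) + a *: (P1 - Y)) -
    ((1 - a) *: ((1 - b) *: (A - X) + b *: (B - X)) + a *: ((1 - b) *: (B - X) + b *: (C - X))).
  by apply/matrixP => i j; rewrite !mxE; ring.
apply: le_trans (ler_normB _ _) _; rewrite mulr2n mulrDl mul1r.
by apply: lerD; do ?apply: norm_convex_le.
Qed.

Section Interpolation.
Context {R : realType} {d : nat} (om : R -> 'rV[R]_d).

Lemma iter_seqshift k (y : nat -> 'rV[R]_d) : y 0%N = 0 -> forall n,
  iter k (@seqshift R d) y n = if n == 0%N then 0 else y (n + k)%N.
Proof.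
move=> y0; elim: k => [|k IHk] [|n] //=; first by rewrite addn0.
by rewrite /seqshift IHk addSnnS.
Qed.

Lemma phiI_shift_phiP h k s :
  phiI h (iter k (@seqshift R d) (phiP h om)) s =
  om ((flr (s / h) + k)%:R * h) - om (k%:R * h) +
  ((s - (flr (s / h))%:R * h) / h) *:
    (om ((flr (s / h) + k).+1%:R * h) - om ((flr (s / h) + k)%:R * h)).
Proof.
rewrite /phiI iter_seqshift //= addSn big_nat_recl //= add0r; congr (_ + _).
rewrite (telescope_sumr_eq (fun i => om ((i + k)%:R * h))) // => i _.
by rewrite iter_seqshift.
Qed.

Lemma norm_theta_thetabar_le h t s T e : 0 < h -> 0 <= t -> 0 <= s -> t + s <= T ->
  (forall x y, 0 <= x <= T -> 0 <= y -> `|x - y| <= 2 * h -> `|om x - om y| <= e) ->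
  `|theta t om s - thetabar h t om s| <= 2 * e.
Proof.
move=> h0 t0 s0 tsT om_mod.
rewrite /thetabar !phiI_shift_phiP /theta addnS.
have /andP[tk1 tk2] := flr_div_itv _ _ t0 h0; have /andP[sm1 sm2] := flr_div_itv _ _ s0 h0.
set k := flr (t / h) in tk1 tk2 *; set m := flr (s / h) in sm1 sm2 *.
set a := (t - k%:R * h) / h; set b := (s - m%:R * h) / h.
have -> : ((k.+1)%:R * h - t) / h = 1 - a by rewrite /a; field; rewrite gt_eqF.
have near_ts z : 0 <= z -> `|(t + s) - z| <= 2 * h -> `|om z - om (t + s)| <= e.
  by move=> z0 tsz; rewrite distrC om_mod //; apply/andP; split; lra.
have near_t z : 0 <= z -> `|t - z| <= 2 * h -> `|om z - om t| <= e.
  by move=> z0 tz; rewrite distrC om_mod //; apply/andP; split; lra.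
have grid_ge0 j : 0 <= j%:R * h by rewrite mulr_ge0 // ltW.
have k0 : 0 <= k%:R :> R by [].
have m0 : 0 <= m%:R :> R by [].
have Sk : (k.+1%:R : R) = k%:R + 1 by rewrite -natr1.
have mk : ((m + k)%:R : R) = m%:R + k%:R by rewrite natrD.
have Smk : ((m + k).+1%:R : R) = m%:R + k%:R + 1 by rewrite -natr1 natrD.
have SSmk : ((m + k).+2%:R : R) = m%:R + k%:R + 2 by rewrite -addn2 !natrD.
apply: interpolation_error_le.
- by rewrite /a ler_pdivlMr // ler_pdivrMr // mul0r mul1r; apply/andP; split; lra.
- by rewrite /b ler_pdivlMr // ler_pdivrMr // mul0r mul1r; apply/andP; split; lra.
- by apply: near_t; [exact: grid_ge0 | rewrite ler_norml; apply/andP; split; nra].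
- by apply: near_t; [exact: grid_ge0 | rewrite ler_norml Sk; apply/andP; split; nra].
- by apply: near_ts; [exact: grid_ge0 | rewrite ler_norml mk; apply/andP; split; nra].
- by apply: near_ts; [exact: grid_ge0 | rewrite ler_norml Smk; apply/andP; split; nra].
- by apply: near_ts; [exact: grid_ge0 | rewrite ler_norml SSmk; apply/andP; split; nra].
Qed.

End Interpolation.

Lemma supdist_ge0 {R : realType} {d} (f g : R -> 'rV[R]_d) n : 0 <= supdist f g n.
Proof.
rewrite /supdist; set E := [set _ | _ in _].
have E0 : E (enorm (f 0 - g 0)) by exists 0; rewrite //= in_itv /= lexx ler0n.
have en0 : 0 <= enorm (f 0 - g 0) by rewrite sqrtr_ge0.
have [ub|nub] := pselect (has_ubound E); first exact: le_trans en0 (ub_le_sup ub E0).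
by rewrite sup_out // => -[_]; exact: nub.
Qed.

Lemma supdist_le {R : realType} {d} (f g : R -> 'rV[R]_d) n c :
  (forall s, 0 <= s <= n%:R -> enorm (f s - g s) <= c) -> supdist f g n <= c.
Proof.
move=> fg; apply: ge_sup; first by exists (enorm (f 0 - g 0)), 0; rewrite //= in_itv /= lexx ler0n.
by move=> _ [s /= s_in <-]; apply: fg; rewrite in_itv /= in s_in.
Qed.

Theorem theorem5p1 (R : realType) (d : nat) (om : R -> 'rV[R]_d) (t : R) :
  in_Omega om -> 0 <= t ->
  Dmetric (theta t om) (thetabar h t om) @[h --> 0^'+] --> 0.
Proof.
move=> [om_cont _] t0; apply/cvgrPdist_lt => eps eps0.
have [M M0 tailM] := inv2_exp_lt (eps / 2) (divr_gt0 eps0 (ltr0n R 2)).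
pose c := eps / 4; pose e := c / (2 * (d%:R + 1)).
have e0 : 0 < e by rewrite divr_gt0 ?mulr_gt0 ?ltr_wpDl //; lra.
have ce : d%:R * (2 * e) <= c.
  have -> : c = d%:R * (2 * e) + 2 * e by rewrite /e; field; rewrite gt_eqF ?ltr_wpDl.
  by rewrite lerDl; lra.
have [r r0 om_unif] := uniform_continuous_nonneg om_cont (t + M%:R) e e0.
near=> h.
have h0 : 0 < h by near: h; exact: nbhs_right_gt.
have hr : 2 * h < r.
  have : h < r / 2 by near: h; apply: nbhs_right_lt; rewrite divr_gt0.
  lra.
have sd0 := supdist_ge0 (theta t om) (thetabar h t om).
rewrite DmetricE sub0r normrN ger0_norm ?(lim_Dseries_ge0 sd0) //.
have c0 : 0 <= c by rewrite /c; lra.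
apply: le_lt_trans (lim_Dseries_le sd0 _ _ M0 c0 _) _; last by rewrite /c; lra.
move=> n nM; apply: supdist_le => s /andP[s0 sn].
apply: le_trans (enorm_le_mx_norm _) (le_trans _ ce).
have tsM : t + s <= t + M%:R.
  have : (n%:R : R) <= M%:R by rewrite ler_nat ltnW.
  lra.
rewrite ler_wpM2l //; apply: (norm_theta_thetabar_le om h t s (t + M%:R) e h0 t0 s0 tsM).
by move=> x y xT y0 xy; apply/ltW/om_unif; rewrite // (le_lt_trans xy).
Unshelve. all: by end_near.
Qed.
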